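(* Let $G$ be a Lie group, let $\mathcal{X}$ and $\mathcal{Y}$ be linear vector fields on $G$ with flows $(\varphi_t)$ and $(\psi_t)$, and suppose there is an automorphism $\pi:G\to G$ with $\pi(\varphi_t(x))=\psi_t(\pi(x))$ and $\varphi_t(\pi^{-1}(x))=\pi^{-1}(\psi_t(x))$ for all $t\in\mathbb{R}$, $x\in G$. Let $h:G\to G$ be a (continuous) homomorphism, $K=\ker(h)$, $S=\ker(h\circ\pi^{-1})$, and set $I_1=\{x\in G:\varphi_t(x)\in K\ \forall t\in\mathbb{R}\}$, $I_2=\{y\in G:\psi_t(y)\in S\ \forall t\in\mathbb{R}\}$. Then $I_1$ is discrete if and only if $I_2$ is discrete. Moreover, $\mathrm{Fix}(\varphi)\cap K=\{e\}$ if and only if $\mathrm{Fix}(\psi)\cap S=\{e\}$.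
   Context: A vector field on a Lie group $G$ is linear if its flow is a one-parameter subgroup of $\mathrm{Aut}(G)$. $\mathrm{Fix}(\varphi)=\{g\in G:\varphi_t(g)=g\ \forall t\in\mathbb{R}\}$ denotes the set of fixed points of the flow $\varphi$, and $e$ is the identity of $G$. *)

From HB Require Import structures.
From mathcomp Require Import all_boot all_order all_algebra.
From mathcomp Require Import all_classical all_reals topology normedtype.
Set Implicit Arguments. Unset Strict Implicit. Unset Printing Implicit Defensive.
Import GRing.Theory Num.Theory numFieldNormedType.Exports.
Local Open Scope classical_set_scope.
Local Open Scope ring_scope.

Definition is_group (G : Type) (mul : G -> G -> G) (inv : G -> G) (e : G) : Prop :=
  [/\ (forall x y z, mul x (mul y z) = mul (mul x y) z),
      (forall x, mul e x = x /\ mul x e = x) &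
      (forall x, mul (inv x) x = e /\ mul x (inv x) = e)].

Definition topological_group (G : topologicalType)
  (mul : G -> G -> G) (inv : G -> G) (e : G) : Prop :=
  [/\ is_group mul inv e,
      continuous (fun p : G * G => mul p.1 p.2) &
      continuous inv].

Definition group_hom (G : Type) (mul : G -> G -> G) (f : G -> G) : Prop :=
  forall x y, f (mul x y) = mul (f x) (f y).

(* The flow of a linear vector field: a continuous one-parameter group
   (t |-> phi t) of continuous automorphisms of G, jointly continuous in (t,x). *)
Definition linear_flow (R : realType) (G : topologicalType)
  (mul : G -> G -> G) (phi : R -> G -> G) : Prop :=
  [/\ (forall t, group_hom mul (phi t)),
      (forall t, continuous (phi t)),
      (forall x, phi 0 x = x),
      (forall t s x, phi (t + s) x = phi t (phi s x)) &
      continuous (fun p : R * G => phi p.1 p.2)].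

Definition Fix (R : realType) (G : Type) (phi : R -> G -> G) : set G :=
  [set g | forall t, phi t g = g].

Definition Ker (G : Type) (e : G) (f : G -> G) : set G := [set x | f x = e].

Definition discrete_set (G : topologicalType) (A : set G) : Prop :=
  forall a, A a -> exists U : set G, nbhs a U /\ (forall y, U y -> A y -> y = a).

From mathcomp Require Import all_boot all_order all_algebra.
From mathcomp Require Import all_classical all_reals topology normedtype.
Set Implicit Arguments.
Unset Strict Implicit.
Unset Printing Implicit Defensive.
Import numFieldNormedType.Exports.
Local Open Scope classical_set_scope.

(* The automorphism [pi] is a homeomorphism fixing [e] that conjugates [phi]
   to [psi] and carries [K] onto [S], hence [I1] onto [I2] and
   [Fix phi `&` K] onto [Fix psi `&` S]. Discreteness pulls back along
   continuous injections and [[set e]] along injections fixing [e], so both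
   properties transfer, through [pi^-1] one way and through [pi] the other. *)

Lemma group_hom1 (G : Type) (mul : G -> G -> G) (inv : G -> G) (e : G)
    (f : G -> G) :
  is_group mul inv e -> group_hom mul f -> f e = e.
Proof.
move=> [mulA mul1 mulV] fM.
have fe2 : f e = mul (f e) (f e) by rewrite -fM (mul1 e).1.
by rewrite -[RHS](mulV (f e)).1 {3}fe2 mulA (mulV (f e)).1 (mul1 (f e)).1.
Qed.

Lemma preimage_set1_inj (T : Type) (f : T -> T) (a : T) :
  injective f -> f a = a -> f @^-1` [set a] = [set a].
Proof.
move=> f_inj fa; apply/seteqP; split=> x /=; last by move->.
by rewrite -{1}fa => /f_inj.
Qed.

Lemma discrete_set_preimage (T U : topologicalType) (f : T -> U)
    (A : set U) (B : set T) :
  continuous f -> injective f -> B `<=` f @^-1` A ->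
  discrete_set A -> discrete_set B.
Proof.
move=> f_cont f_inj BA dA b Bb.
have [V [Vfb Vsep]] := dA _ (BA _ Bb).
exists (f @^-1` V); split; first exact: f_cont.
by move=> y Vfy By; apply: f_inj; apply: Vsep; last exact: BA.
Qed.

Section Conjugate.
Variables (R : realType) (G : topologicalType) (phi psi : R -> G -> G).
Variable f : G -> G.
Hypothesis f_inj : injective f.
Hypothesis f_conj : forall t y, f (psi t y) = phi t (f y).

Definition invariant_core (flow : R -> G -> G) (A : set G) : set G :=
  [set x | forall t, A (flow t x)].

Lemma invariant_core_conj (A B : set G) : B `<=` f @^-1` A ->
  invariant_core psi B `<=` f @^-1` invariant_core phi A.
Proof. by move=> BA y By t; rewrite /= -f_conj; apply: BA. Qed.

Lemma discrete_invariant_core_conj (A B : set G) :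
  continuous f -> B `<=` f @^-1` A ->
  discrete_set (invariant_core phi A) -> discrete_set (invariant_core psi B).
Proof.
move=> f_cont BA; apply: discrete_set_preimage f_cont f_inj _.
exact: invariant_core_conj.
Qed.

Lemma Fix_conj : Fix psi = f @^-1` Fix phi.
Proof.
apply/seteqP; split=> y /= Fy t; first by rewrite -f_conj Fy.
by apply: f_inj; rewrite f_conj.
Qed.

Lemma Fix_setI_conj (e : G) (A : set G) : f e = e ->
  Fix phi `&` A = [set e] -> Fix psi `&` f @^-1` A = [set e].
Proof.
by move=> fe; rewrite Fix_conj -preimage_setI => ->; apply: preimage_set1_inj.
Qed.

End Conjugate.

Theorem corollary2p7 (R : realType) (G : topologicalType)
  (mul : G -> G -> G) (inv : G -> G) (e : G)
  (phi psi : R -> G -> G) (pi piinv h : G -> G) :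
  topological_group mul inv e ->
  linear_flow mul phi -> linear_flow mul psi ->
  group_hom mul pi -> continuous pi -> continuous piinv ->
  cancel pi piinv -> cancel piinv pi ->
  (forall t x, pi (phi t x) = psi t (pi x)) ->
  (forall t x, phi t (piinv x) = piinv (psi t x)) ->
  group_hom mul h -> continuous h ->
  let K := Ker e h in
  let S := Ker e (fun x => h (piinv x)) in
  let I1 := [set x | forall t, K (phi t x)] in
  let I2 := [set y | forall t, S (psi t y)] in
  (discrete_set I1 <-> discrete_set I2) /\
  (Fix phi `&` K = [set e] <-> Fix psi `&` S = [set e]).
Proof.
move=> [grp _ _] _ _ piM pi_cont piinv_cont piK piinvK pi_phi phi_piinv _ _.
move=> K S I1 I2.
have pi_inj := can_inj piK; have piinv_inj := can_inj piinvK.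
have piinv_psi t y : piinv (psi t y) = phi t (piinv y) by rewrite phi_piinv.
have pi1 : pi e = e := group_hom1 grp piM.
have piinv1 : piinv e = e by rewrite -{1}pi1 piK.
have K_pi : K = pi @^-1` S by apply/seteqP; split=> x; rewrite /S /Ker /= piK.
split; split.
- exact: (discrete_invariant_core_conj piinv_inj piinv_psi piinv_cont
    (fun y (Sy : S y) => Sy)).
- have KS : K `<=` pi @^-1` S by rewrite K_pi.
  exact: (discrete_invariant_core_conj pi_inj pi_phi pi_cont KS).
- exact: (Fix_setI_conj piinv_inj piinv_psi (A := K) piinv1).
- by rewrite K_pi; apply: (Fix_setI_conj pi_inj pi_phi (A := S) pi1).
Qed.
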